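(* If $X$ is a Hausdorff space with basepoint $e$, then the James reduced product $J(X)$, with the operation of word concatenation, is a pre-$\Delta$-monoid.
   Context: The James reduced product of a based space $(X,e)$ is $J(X)=\coprod_{n\in\mathbb{N}}X^n/\sim$ where $\sim$ is generated by $(x_1,\dots,x_{j-1},e,x_{j+1},\dots,x_n)\sim(x_1,\dots,x_{j-1},x_{j+1},\dots,x_n)$; elements are finite words in $X\setminus\{e\}$ (with $e$ the empty word), and word concatenation makes $J(X)$ the free monoid on $(X,e)$. Topology: $X^n$ has the product topology, $J_n(X)=q(X^n)$ (words of length $\leq n$) has the quotient topology from $q_n:X^n\to J_n(X)$, and $J(X)$ has the weak (inductive limit) topology with respect to $\{J_n(X)\}$: $C\subseteq J(X)$ is closed iff $C\cap J_n(X)$ is closed in $J_n(X)$ for all $n$. A pre-$\Delta$-monoid is a space $M$ with an associative operation $\ast$ with identity such that for any continuous paths $\alpha,\beta:[0,1]\to M$, the pointwise product $t\mapsto\alpha(t)\ast\beta(t)$ is continuous. *)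

From Stdlib Require Import Reals List Classical ClassicalEpsilon.
Open Scope R_scope.

Definition topology (X : Type) := (X -> Prop) -> Prop.

Definition is_topology {X : Type} (T : topology X) : Prop :=
  T (fun _ => True) /\
  (forall U V, T U -> T V -> T (fun x => U x /\ V x)) /\
  (forall (I : Type) (F : I -> X -> Prop),
      (forall i, T (F i)) -> T (fun x => exists i, F i x)).

Definition closed {X : Type} (T : topology X) (C : X -> Prop) : Prop :=
  T (fun x => ~ C x).

Definition continuous {X Y : Type} (TX : topology X) (TY : topology Y)
  (f : X -> Y) : Prop :=
  forall V, TY V -> TX (fun x => V (f x)).

Definition hausdorff {X : Type} (T : topology X) : Prop :=
  forall x y : X, x <> y ->
    exists U V, T U /\ T V /\ U x /\ V y /\ (forall z, ~ (U z /\ V z)).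

Definition R_topology : topology R :=
  fun U => forall x, U x -> exists eps, 0 < eps /\
             forall y, Rabs (y - x) < eps -> U y.

Definition I01 := {t : R | 0 <= t <= 1}.

Definition I01_topology : topology I01 :=
  fun V => exists U, R_topology U /\ forall t : I01, V t <-> U (proj1_sig t).

Definition tuple (n : nat) (X : Type) := {l : list X | length l = n}.

Definition in_box {X : Type} (Us : list (X -> Prop)) (l : list X) : Prop :=
  Forall2 (fun U x => U x) Us l.

Definition product_topology {X : Type} (T : topology X) (n : nat)
  : topology (tuple n X) :=
  fun W => forall l : tuple n X, W l ->
    exists Us : list (X -> Prop), Forall T Us /\ in_box Us (proj1_sig l) /\
      forall l' : tuple n X, in_box Us (proj1_sig l') -> W l'.

Definition quotient_topology {A B : Type} (TA : topology A) (q : A -> B)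
  : topology B :=
  fun V => TA (fun a => V (q a)).

Definition weak_topology {M : Type} (A : nat -> M -> Prop)
  (T : forall n, topology {m : M | A n m}) : topology M :=
  fun U => forall n, closed (T n) (fun m => ~ U (proj1_sig m)).

(** James reduced product: reduced words (no letter equal to e). *)
Definition J (X : Type) (e : X) := {l : list X | Forall (fun x => x <> e) l}.

Definition is_not_e {X : Type} (e x : X) : bool :=
  if excluded_middle_informative (x = e) then false else true.

Lemma reduce_ok {X : Type} (e : X) (l : list X) :
  Forall (fun x => x <> e) (filter (is_not_e e) l).
Proof.
  apply Forall_forall; intros x Hx; apply filter_In in Hx as [_ Hx].
  unfold is_not_e in Hx; destruct (excluded_middle_informative (x = e));
    [discriminate | assumption].
Qed.

Definition reduce {X : Type} (e : X) (l : list X) : J X e :=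
  exist _ (filter (is_not_e e) l) (reduce_ok e l).

Definition Jn_pred {X : Type} (e : X) (n : nat) (w : J X e) : Prop :=
  (length (proj1_sig w) <= n)%nat.

Definition Jn (X : Type) (e : X) (n : nat) := {w : J X e | Jn_pred e n w}.

Lemma qn_ok {X : Type} (e : X) (n : nat) (l : tuple n X) :
  Jn_pred e n (reduce e (proj1_sig l)).
Proof.
  unfold Jn_pred; simpl; destruct l as [l Hl]; simpl; rewrite <- Hl; clear Hl.
  induction l as [|a l IH]; simpl; [auto|].
  destruct (is_not_e e a); simpl; [apply le_n_S|apply le_S]; exact IH.
Qed.

Definition qn {X : Type} (e : X) (n : nat) (l : tuple n X) : Jn X e n :=
  exist _ (reduce e (proj1_sig l)) (qn_ok e n l).

Definition Jn_topology {X : Type} (T : topology X) (e : X) (n : nat)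
  : topology (Jn X e n) :=
  quotient_topology (product_topology T n) (qn e n).

Definition J_topology {X : Type} (T : topology X) (e : X) : topology (J X e) :=
  weak_topology (Jn_pred e) (Jn_topology T e).

Definition J_concat {X : Type} (e : X) (u v : J X e) : J X e :=
  exist _ (proj1_sig u ++ proj1_sig v)
    (proj2 (Forall_app _ _ _) (conj (proj2_sig u) (proj2_sig v))).

Definition J_empty {X : Type} (e : X) : J X e := exist _ nil (Forall_nil _).

Definition pre_Delta_monoid {M : Type} (T : topology M)
  (op : M -> M -> M) (one : M) : Prop :=
  is_topology T /\
  (forall a b c, op (op a b) c = op a (op b c)) /\
  (forall a, op one a = a /\ op a one = a) /\
  (forall alpha beta : I01 -> M,
      continuous I01_topology T alpha -> continuous I01_topology T beta ->
      continuous I01_topology T (fun t => op (alpha t) (beta t))).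

(** The word-length filtration J_n(X) is what makes J(X) x J(X) -> J(X)
    delicate, but a path only ever sees finitely many layers.  Since X is
    Hausdorff, points of X^n are closed and every word of length <= n has
    finitely many preimages in X^n (one per placement of its letters); as
    these placements act by continuous coordinate maps, each [q_n] is a closed
    map and points of J(X) are closed.  Hence a set meeting each J_n(X) in
    finitely many words is closed, and compactness of [0,1] forces every path
    into some J_N(X).  On J_N1(X) x J_N2(X) concatenation is continuous, by the
    tube lemma around the finite fibres of [q_N1] x [q_N2] in X^(N1+N2). *)

From Stdlib Require Import Reals List Lra Lia Classical ClassicalEpsilon ProofIrrelevance FunctionalExtensionality PropExtensionality.
Open Scope R_scope.

Fixpoint gather {A : Type} (M : list bool) (l : list A) : list A :=
  match M, l with
  | b :: M', x :: l' => if b then x :: gather M' l' else gather M' l'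
  | _, _ => nil
  end.

Fixpoint scatter {A : Type} (e : A) (M : list bool) (l : list A) : list A :=
  match M with
  | nil => nil
  | true :: M' =>
      match l with nil => e :: scatter e M' nil | z :: l' => z :: scatter e M' l' end
  | false :: M' => e :: scatter e M' l
  end.

Fixpoint count_true (M : list bool) : nat :=
  match M with nil => 0%nat | b :: M' => if b then S (count_true M') else count_true M' end.

Fixpoint bool_lists (k : nat) : list (list bool) :=
  match k with
  | 0%nat => nil :: nil
  | S k => map (cons true) (bool_lists k) ++ map (cons false) (bool_lists k)
  end.

Definition mask_covers {A : Type} (e : A) (M : list bool) (y : list A) : Prop :=
  Forall2 (fun b z => b = false -> z = e) M y.

Lemma in_bool_lists k M : In M (bool_lists k) <-> length M = k.
Proof.
  revert M; induction k as [|k IH]; intros M; simpl.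
  - split; [intros [<-|[]]; reflexivity|destruct M; [auto|discriminate]].
  - rewrite in_app_iff, !in_map_iff. split.
    + intros [(M' & <- & H)|(M' & <- & H)]; simpl; f_equal; apply IH; exact H.
    + destruct M as [|[|] M]; simpl; intros H; try discriminate; injection H as H;
        [left|right]; exists M; split; auto; apply IH; exact H.
Qed.

Lemma length_scatter {A} (e : A) M l : length (scatter e M l) = length M.
Proof. revert l; induction M as [|[|] M IH]; intros [|z l]; simpl; auto. Qed.

Lemma length_gather {A} M (l : list A) : length M = length l -> length (gather M l) = count_true M.
Proof. revert l; induction M as [|[|] M IH]; intros [|z l] H; simpl in *; try lia; auto. Qed.

Lemma count_true_map {A} (f : A -> bool) x : count_true (map f x) = length (filter f x).
Proof. induction x; simpl; auto. destruct (f a); simpl; auto. Qed.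

Lemma gather_map {A} (f : A -> bool) y : gather (map f y) y = filter f y.
Proof. induction y; simpl; auto. destruct (f a); simpl; congruence. Qed.

Section Filter.
Context {A : Type} (e : A) (f : A -> bool) (f_false : forall a, f a = false <-> a = e).

Lemma scatter_filter x : scatter e (map f x) (filter f x) = x.
Proof.
  induction x as [|a x IH]; simpl; auto. destruct (f a) eqn:E; simpl.
  - congruence.
  - rewrite (proj1 (f_false a) E); congruence.
Qed.

Lemma filter_scatter M l :
  length l = count_true M -> filter f (scatter e M l) = filter f l.
Proof.
  assert (He : f e = false) by (apply f_false; reflexivity).
  revert l; induction M as [|[|] M IH]; intros [|z l] Hl; simpl in *; try lia; auto.
  - destruct (f z); [f_equal|]; apply IH; lia.
  - rewrite He; apply IH; auto.
  - rewrite He; apply IH; simpl; lia.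
Qed.

Lemma filter_gather M y : mask_covers e M y -> filter f (gather M y) = filter f y.
Proof.
  intros H; induction H as [|b z M y Hb H IH]; simpl; auto. destruct b; simpl.
  - destruct (f z); congruence.
  - rewrite (Hb eq_refl), (proj2 (f_false e) eq_refl); auto.
Qed.

Lemma mask_covers_map y : mask_covers e (map f y) y.
Proof. induction y; constructor; auto. apply f_false. Qed.

End Filter.

Section PowerTopology.
Context {X : Type} (T : topology X) (HT : is_topology T).

(** The product topology on X^k, on lists of length [k] rather than on [tuple k X]. *)
Definition power_open (k : nat) (W : list X -> Prop) : Prop :=
  forall l, length l = k -> W l ->
    exists Us, Forall T Us /\ in_box Us l /\ forall l', in_box Us l' -> W l'.

Lemma in_box_length (Us : list (X -> Prop)) l : in_box Us l -> length l = length Us.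
Proof. intros H; symmetry; exact (Forall2_length H). Qed.

Lemma power_open_ext k (P Q : list X -> Prop) :
  (forall l, length l = k -> (P l <-> Q l)) -> power_open k P -> power_open k Q.
Proof.
  intros Hpq HP l Hl Ql. destruct (HP l Hl (proj2 (Hpq l Hl) Ql)) as (Us & HUs & Hl' & HW).
  exists Us; repeat split; auto. intros l' Hb.
  apply Hpq; [|auto]. rewrite (in_box_length _ _ Hb), <- (in_box_length _ _ Hl'); exact Hl.
Qed.

Lemma product_topology_power_open n (W : list X -> Prop) :
  product_topology T n (fun t => W (proj1_sig t)) <-> power_open n W.
Proof.
  split.
  - intros H l Hl Wl. destruct (H (exist _ l Hl) Wl) as (Us & HUs & Hb & HW).
    exists Us; repeat split; auto. intros l' Hb'.
    assert (Hl' : length l' = n)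
      by (rewrite (in_box_length _ _ Hb'), <- (in_box_length _ _ Hb); exact Hl).
    exact (HW (exist _ l' Hl') Hb').
  - intros H [l Hl] Wl. destruct (H l Hl Wl) as (Us & HUs & Hb & HW).
    exists Us; repeat split; auto.
Qed.

Lemma J_open_iff e (U : J X e -> Prop) :
  J_topology T e U <-> forall n, power_open n (fun l => U (reduce e l)).
Proof.
  unfold J_topology, weak_topology, closed, Jn_topology, quotient_topology.
  split; intros H n; specialize (H n).
  - apply (product_topology_power_open n (fun l => ~ ~ U (reduce e l))) in H.
    revert H; apply power_open_ext. intros l _; split; [apply NNPP|auto].
  - apply (product_topology_power_open n (fun l => ~ ~ U (reduce e l))).
    revert H; apply power_open_ext. intros l _; split; [auto|apply NNPP].
Qed.

Lemma in_box_trivial (l : list X) : in_box (map (fun _ _ => True) l) l.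
Proof. induction l; constructor; auto. Qed.

Lemma open_trivial_box (l : list X) : Forall T (map (fun _ _ => True) l).
Proof. induction l; constructor; auto. apply HT. Qed.

Lemma power_open_true k : power_open k (fun _ => True).
Proof.
  intros l _ _. exists (map (fun _ _ => True) l).
  split; [apply open_trivial_box|split; [apply in_box_trivial|auto]].
Qed.

Lemma power_open_false k : power_open k (fun _ => False).
Proof. intros l _ []. Qed.

Lemma power_open_box k Us : Forall T Us -> power_open k (in_box Us).
Proof. intros HF l _ Hl. exists Us; auto. Qed.

Lemma power_open_or k P Q :
  power_open k P -> power_open k Q -> power_open k (fun l => P l \/ Q l).
Proof.
  intros HP HQ l Hl [Pl|Ql].
  - destruct (HP l Hl Pl) as (Us & ? & ? & HW); exists Us; repeat split; auto.
  - destruct (HQ l Hl Ql) as (Us & ? & ? & HW); exists Us; repeat split; auto.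
Qed.

Lemma in_box_inter Us1 Us2 l :
  Forall T Us1 -> Forall T Us2 -> in_box Us1 l -> in_box Us2 l ->
  exists Us, Forall T Us /\ in_box Us l /\
    forall l', in_box Us l' -> in_box Us1 l' /\ in_box Us2 l'.
Proof.
  intros F1 F2 B1; revert Us2 F2; induction B1 as [|U1 z Vs1 l HU1 B1 IH];
    intros Us2 F2 B2; inversion B2 as [|U2 ? Vs2 ? HU2 B2']; subst.
  - exists nil; split; [constructor|split; [constructor|]].
    intros l' H; inversion H; split; constructor.
  - apply Forall_cons_iff in F1 as [TU1 F1], F2 as [TU2 F2].
    destruct (IH F1 Vs2 F2 B2') as (Us & HUs & Hb & Hsub).
    exists ((fun x => U1 x /\ U2 x) :: Us); split; [|split].
    + constructor; auto. apply HT; auto.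
    + constructor; auto.
    + intros l' Hl'; inversion Hl' as [|? ? ? ? Hz Hl'']; subst.
      destruct Hz, (Hsub _ Hl''); split; constructor; auto.
Qed.

Lemma power_open_and k P Q :
  power_open k P -> power_open k Q -> power_open k (fun l => P l /\ Q l).
Proof.
  intros HP HQ l Hl [Pl Ql].
  destruct (HP l Hl Pl) as (Us1 & F1 & B1 & H1), (HQ l Hl Ql) as (Us2 & F2 & B2 & H2).
  destruct (in_box_inter Us1 Us2 l F1 F2 B1 B2) as (Us & HUs & Hb & Hsub).
  exists Us; split; [|split]; auto. intros l'' H; destruct (Hsub _ H); split; auto.
Qed.

Lemma power_open_forall_list {A} k (L : list A) (P : A -> list X -> Prop) :
  (forall a, In a L -> power_open k (P a)) ->
  power_open k (fun y => forall a, In a L -> P a y).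
Proof.
  induction L as [|a L IH]; intros H.
  - refine (power_open_ext _ _ _ _ (power_open_true k)); intros l _; simpl; tauto.
  - refine (power_open_ext _ _ _ _
      (power_open_and _ _ _ (H a (or_introl eq_refl)) (IH (fun b Hb => H b (or_intror Hb))))).
    intros l _; simpl; split.
    + intros [H1 H2] b [<-|Hb]; auto.
    + intros H'; split; auto.
Qed.

Definition cons_set (U : X -> Prop) (P : list X -> Prop) (l : list X) : Prop :=
  match l with nil => False | z :: y => U z /\ P y end.

Lemma power_open_cons k U P : T U -> power_open k P -> power_open (S k) (cons_set U P).
Proof.
  intros HU HP [|z y] Hl Hzy; [contradiction|destruct Hzy as [Uz Py]]. injection Hl as Hl.
  destruct (HP y Hl Py) as (Us & HUs & Hb & HW).
  exists (U :: Us); split; [constructor; auto|split; [constructor; auto|]].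
  intros [|z' y'] H; inversion H; subst; split; auto.
Qed.

Definition box_continuous (k : nat) (g : list X -> list X) : Prop :=
  forall y Vs, length y = k -> Forall T Vs -> in_box Vs (g y) ->
    exists Us, Forall T Us /\ in_box Us y /\ forall y', in_box Us y' -> in_box Vs (g y').

Lemma power_open_preimage k k' g W :
  (forall y, length y = k -> length (g y) = k') -> box_continuous k g ->
  power_open k' W -> power_open k (fun y => W (g y)).
Proof.
  intros Hl Hg HW y Hy Wy. destruct (HW (g y) (Hl y Hy) Wy) as (Vs & HVs & Hb & HWV).
  destruct (Hg y Vs Hy HVs Hb) as (Us & HUs & Hb' & Hsub). exists Us; auto.
Qed.

Lemma box_continuous_gather M : box_continuous (length M) (gather M).
Proof.
  induction M as [|b M IH]; intros y Vs Hy HVs Hb.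
  - destruct y; [|discriminate]. exists nil; split; [constructor|split; [constructor|]].
    intros y' _; destruct y'; exact Hb.
  - destruct y as [|z y]; [discriminate|]. injection Hy as Hy. destruct b; simpl in Hb.
    + inversion Hb as [|V ? Vs' ? HVz Hb']; subst. apply Forall_cons_iff in HVs as [HV HVs].
      destruct (IH y Vs' Hy HVs Hb') as (Us & HUs & HbU & Hsub).
      exists (V :: Us); split; [constructor; auto|split; [constructor; auto|]].
      intros [|z' y'] H; inversion H as [|? ? ? ? Hz Hy']; subst; constructor; [exact Hz|exact (Hsub _ Hy')].
    + destruct (IH y Vs Hy HVs Hb) as (Us & HUs & HbU & Hsub).
      exists ((fun _ => True) :: Us); split; [constructor; auto; apply HT|split; [constructor; auto|]].
      intros [|z' y'] H; inversion H as [|? ? ? ? Hz Hy']; subst; exact (Hsub _ Hy').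
Qed.

Lemma box_continuous_scatter e M : box_continuous (count_true M) (scatter e M).
Proof.
  induction M as [|b M IH]; intros y Vs Hy HVs Hb.
  - exists (map (fun _ _ => True) y).
    split; [apply open_trivial_box|split; [apply in_box_trivial|auto]].
  - destruct b; simpl in Hb, Hy.
    + destruct y as [|z y]; [discriminate|]. injection Hy as Hy.
      inversion Hb as [|V ? Vs' ? HVz Hb']; subst. apply Forall_cons_iff in HVs as [HV HVs].
      destruct (IH y Vs' Hy HVs Hb') as (Us & HUs & HbU & Hsub).
      exists (V :: Us); split; [constructor; auto|split; [constructor; auto|]].
      intros [|z' y'] H; inversion H as [|? ? ? ? Hz Hy']; subst; constructor; [exact Hz|exact (Hsub _ Hy')].
    + inversion Hb as [|V ? Vs' ? HVz Hb']; subst. apply Forall_cons_iff in HVs as [HV HVs].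
      destruct (IH y Vs' Hy HVs Hb') as (Us & HUs & HbU & Hsub).
      exists Us; split; [|split]; auto. intros y' H; constructor; [exact HVz|exact (Hsub _ H)].
Qed.

Lemma power_open_app_box n m W x y :
  power_open (n + m) W -> length x = n -> length y = m -> W (x ++ y) ->
  exists O1 O2, power_open n O1 /\ power_open m O2 /\ O1 x /\ O2 y /\
    forall x' y', O1 x' -> O2 y' -> W (x' ++ y').
Proof.
  intros HW Hx Hy Wxy.
  destruct (HW (x ++ y)) as (Us & HUs & Hb & HWU); [rewrite length_app; lia|auto|].
  destruct (Forall2_app_inv_r _ _ Hb) as (Us1 & Us2 & B1 & B2 & ->).
  apply Forall_app in HUs as [F1 F2].
  exists (in_box Us1), (in_box Us2).
  split; [apply power_open_box; auto|split; [apply power_open_box; auto|]].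
  split; [auto|split; [auto|]]. intros x' y' G1 G2. apply HWU, Forall2_app; auto.
Qed.

Lemma power_open_tube_right n m W x (Lv : list (list X)) :
  power_open (n + m) W -> length x = n ->
  (forall y, In y Lv -> length y = m) -> (forall y, In y Lv -> W (x ++ y)) ->
  exists O1 O2, power_open n O1 /\ power_open m O2 /\ O1 x /\ (forall y, In y Lv -> O2 y) /\
    forall x' y', O1 x' -> O2 y' -> W (x' ++ y').
Proof.
  intros HW Hx. induction Lv as [|y Lv IH]; intros Hm HWy.
  - exists (fun _ => True), (fun _ => False).
    split; [apply power_open_true|split; [apply power_open_false|]].
    split; [auto|split; [intros _ []|intros _ _ _ []]].
  - destruct IH as (O1 & O2 & HO1 & HO2 & Hx1 & Hy2 & HO);
      [intros; apply Hm; simpl; auto|intros; apply HWy; simpl; auto|].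
    destruct (power_open_app_box n m W x y HW Hx (Hm y (or_introl eq_refl)) (HWy y (or_introl eq_refl)))
      as (P & Q & HP & HQ & Px & Qy & HPQ).
    exists (fun z => P z /\ O1 z), (fun z => Q z \/ O2 z).
    split; [apply power_open_and; auto|split; [apply power_open_or; auto|]].
    split; [auto|split].
    + intros y' [<-|Hy']; [left|right]; auto.
    + intros x' y' [G1 G2] [G3|G3]; auto.
Qed.

Lemma power_open_tube n m W (Lu Lv : list (list X)) :
  power_open (n + m) W ->
  (forall x, In x Lu -> length x = n) -> (forall y, In y Lv -> length y = m) ->
  (forall x y, In x Lu -> In y Lv -> W (x ++ y)) ->
  exists O1 O2, power_open n O1 /\ power_open m O2 /\ (forall x, In x Lu -> O1 x) /\
    (forall y, In y Lv -> O2 y) /\ forall x' y', O1 x' -> O2 y' -> W (x' ++ y').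
Proof.
  intros HW Hn Hm. induction Lu as [|x Lu IH]; intros HWxy.
  - exists (fun _ => False), (fun _ => True).
    split; [apply power_open_false|split; [apply power_open_true|]].
    split; [intros _ []|split; [auto|intros _ _ []]].
  - destruct IH as (O1 & O2 & HO1 & HO2 & Hx1 & Hy2 & HO);
      [intros; apply Hn; simpl; auto|intros; apply HWxy; simpl; auto|].
    destruct (power_open_tube_right n m W x Lv HW (Hn x (or_introl eq_refl)) Hm
                (fun y => HWxy x y (or_introl eq_refl))) as (P & Q & HP & HQ & Px & Qy & HPQ).
    exists (fun z => P z \/ O1 z), (fun z => Q z /\ O2 z).
    split; [apply power_open_or; auto|split; [apply power_open_and; auto|]].
    split; [|split].
    + intros x' [<-|Hx']; [left|right]; auto.
    + intros y' Hy'; split; auto.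
    + intros x' y' [G1|G1] [G3 G4]; auto.
Qed.

End PowerTopology.

Lemma pred_ext {A : Type} (P Q : A -> Prop) : (forall a, P a <-> Q a) -> P = Q.
Proof.
  intros H; apply functional_extensionality; intros a; apply propositional_extensionality; auto.
Qed.

Lemma is_not_e_false {X : Type} (e a : X) : is_not_e e a = false <-> a = e.
Proof. unfold is_not_e; destruct (excluded_middle_informative (a = e)); split; congruence. Qed.

Lemma filter_reduced {X : Type} (e : X) l :
  Forall (fun x => x <> e) l -> filter (is_not_e e) l = l.
Proof.
  intros H; induction H as [|x l Hx H IH]; simpl; auto.
  destruct (is_not_e e x) eqn:E; [congruence|exact (False_ind _ (Hx (proj1 (is_not_e_false e x) E)))].
Qed.

Lemma J_eq {X : Type} (e : X) (u v : J X e) : proj1_sig u = proj1_sig v -> u = v.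
Proof. destruct u, v; simpl; intros ->; f_equal; apply proof_irrelevance. Qed.

Section James.
Context {X : Type} (T : topology X) (HT : is_topology T) (HH : hausdorff T) (e : X).

Lemma open_neq a : T (fun z => z <> a).
Proof.
  assert (Hunion : (fun z => exists U : {U : X -> Prop | T U /\ ~ U a}, proj1_sig U z)
                   = (fun z => z <> a)).
  { apply pred_ext; intros z; split.
    - intros ([U [HU HUa]] & Hz) E; subst z; contradiction.
    - intros Hz. destruct (HH z a Hz) as (Uz & Ua & HUz & HUa & Hz' & Ha & Hdisj).
      exists (exist _ Uz (conj HUz (fun H => Hdisj a (conj H Ha)))); exact Hz'. }
  rewrite <- Hunion. apply HT. intros [U [HU HUa]]; exact HU.
Qed.

Lemma power_open_neq (l0 : list X) : power_open T (length l0) (fun x => x <> l0).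
Proof.
  induction l0 as [|a l0 IH].
  - apply (power_open_ext T _ (fun _ => False)); [|apply power_open_false].
    intros [|] Hl; [|discriminate]. split; [contradiction|intros H; apply H, eq_refl].
  - apply (power_open_ext T _ (fun x => cons_set (fun z => z <> a) (fun _ => True) x
                                     \/ cons_set (fun _ => True) (fun y => y <> l0) x)).
    + intros [|z y] Hl; [discriminate|]; simpl. split.
      * intros [[Hz _]|[_ Hy]] E; injection E; auto.
      * intros H. destruct (classic (z = a)) as [->|Hz]; [right|left]; split; auto; congruence.
    + apply power_open_or; apply power_open_cons; auto using open_neq, power_open_true.
      apply HT.
Qed.

Lemma power_open_not_mask_covers M : power_open T (length M) (fun y => ~ mask_covers e M y).
Proof.
  induction M as [|b M IH].
  - apply (power_open_ext T _ (fun _ => False)); [|apply power_open_false].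
    intros [|] Hl; [|discriminate]. split; [contradiction|intros H; apply H; constructor].
  - assert (Hcons : forall z y, mask_covers e (b :: M) (z :: y) <->
                                (b = false -> z = e) /\ mask_covers e M y)
      by (intros; apply Forall2_cons_iff).
    destruct b.
    + apply (power_open_ext T _ (cons_set (fun _ => True) (fun y => ~ mask_covers e M y))).
      * intros [|z y] Hl; [discriminate|]; simpl. rewrite Hcons. split; [tauto|].
        intros Hn; split; [exact I|intros Hc; apply Hn; split; [discriminate|exact Hc]].
      * apply power_open_cons; auto. apply HT.
    + apply (power_open_ext T _ (fun x => cons_set (fun z => z <> e) (fun _ => True) x
                         \/ cons_set (fun _ => True) (fun y => ~ mask_covers e M y) x)).
      * intros [|z y] Hl; [discriminate|]; simpl. rewrite Hcons. split; [intuition|].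
        intros Hn. destruct (classic (z = e)) as [->|Hz]; [right|left]; intuition.
      * apply power_open_or; apply power_open_cons; auto using open_neq, power_open_true.
        apply HT.
Qed.

Definition is_lift (n : nat) (u x : list X) : Prop :=
  length x = n /\ filter (is_not_e e) x = u.

(** For open [O] this is the complement of [q_n (X^n \ O)]. *)
Definition lifts_within (n : nat) (O : list X -> Prop) (w : J X e) : Prop :=
  forall x, is_lift n (proj1_sig w) x -> O x.

(** A lift of [reduce e y] is [scatter e B] applied to the letters [gather A y]
    of [y], for masks [A] and [B] with as many letters; this turns the
    condition into a finite conjunction indexed by the masks. *)
Lemma lifts_within_reduce_iff k n O y : length y = k ->
  lifts_within n O (reduce e y) <->
  forall A, In A (bool_lists k) -> forall B, In B (bool_lists n) ->
    ~ mask_covers e A y \/ (count_true A = count_true B -> O (scatter e B (gather A y))).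
Proof.
  intros Hy. unfold lifts_within; simpl. split.
  - intros H A HA B HB. destruct (classic (mask_covers e A y)) as [Hok|Hn]; [right|left; auto].
    intros Hc. apply in_bool_lists in HA, HB. apply H. split.
    + rewrite length_scatter; exact HB.
    + rewrite (filter_scatter e); [|apply is_not_e_false|].
      * apply (filter_gather e); [apply is_not_e_false|exact Hok].
      * rewrite length_gather; [exact Hc|lia].
  - intros H x [Hx Hf].
    assert (HA : In (map (is_not_e e) y) (bool_lists k))
      by (apply in_bool_lists; rewrite length_map; exact Hy).
    assert (HB : In (map (is_not_e e) x) (bool_lists n))
      by (apply in_bool_lists; rewrite length_map; exact Hx).
    destruct (H _ HA _ HB) as [Hn|Hc].
    + exfalso; apply Hn, mask_covers_map, is_not_e_false.
    + rewrite gather_map, <- Hf, scatter_filter in Hc; [|apply is_not_e_false].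
      apply Hc. rewrite !count_true_map, Hf; reflexivity.
Qed.

Lemma lifts_within_open n O : power_open T n O -> J_topology T e (lifts_within n O).
Proof.
  intros HO. apply J_open_iff; intros k.
  refine (power_open_ext T k _ _ (fun y Hy => iff_sym (lifts_within_reduce_iff k n O y Hy)) _).
  apply power_open_forall_list; auto. intros A HA.
  apply power_open_forall_list; auto. intros B HB.
  apply in_bool_lists in HA, HB. apply power_open_or.
  - rewrite <- HA. apply power_open_not_mask_covers.
  - destruct (Nat.eq_dec (count_true A) (count_true B)) as [Heq|Hne].
    + refine (power_open_ext T k (fun y => O (scatter e B (gather A y))) _ _ _).
      * intros y _; split; auto.
      * apply (power_open_preimage T k (count_true B) (gather A) (fun l => O (scatter e B l))).
        -- intros y Hy. rewrite length_gather; lia.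
        -- rewrite <- HA. apply box_continuous_gather; auto.
        -- apply (power_open_preimage T (count_true B) n (scatter e B)); auto.
           ++ intros y _. rewrite length_scatter; exact HB.
           ++ apply box_continuous_scatter; auto.
    + refine (power_open_ext T k (fun _ => True) _ _ (power_open_true T HT k)).
      intros y _; split; [intros _ Hc; contradiction|auto].
Qed.

Lemma J_compl_point_open (w0 : J X e) : J_topology T e (fun w => w <> w0).
Proof.
  assert (Hw0 : filter (is_not_e e) (proj1_sig w0) = proj1_sig w0)
    by (apply filter_reduced, proj2_sig).
  replace (fun w => w <> w0)
    with (lifts_within (length (proj1_sig w0)) (fun x => x <> proj1_sig w0)).
  - apply lifts_within_open, power_open_neq.
  - apply pred_ext; intros w; split.
    + intros H ->. apply (H (proj1_sig w0)); split; auto.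
    + intros Hw x [_ Hf] ->. apply Hw, J_eq. rewrite <- Hf; exact Hw0.
Qed.

(** A set of words containing finitely many words of each length is closed. *)
Lemma J_compl_seq_open (w : nat -> J X e) :
  (forall j, j < length (proj1_sig (w j)))%nat ->
  J_topology T e (fun u => ~ exists j, u = w j).
Proof.
  intros Hw. apply J_open_iff; intros k.
  apply (power_open_ext T k (fun y => forall j, In j (seq 0 (S k)) -> reduce e y <> w j)).
  - intros y Hy; split.
    + intros H (j & Hj). destruct (Nat.lt_ge_cases j (S k)) as [Hjk|Hjk].
      * apply (H j); [apply in_seq; lia|exact Hj].
      * specialize (Hw j). rewrite <- Hj in Hw; simpl in Hw.
        pose proof (filter_length_le (is_not_e e) y). lia.
    + intros H j _ Hj. apply H; exists j; exact Hj.
  - apply power_open_forall_list; auto. intros j _.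
    exact (proj1 (J_open_iff T e _) (J_compl_point_open (w j)) k).
Qed.

End James.

Lemma I01_open_nbhd (V : I01 -> Prop) t : I01_topology V -> V t ->
  exists eps, 0 < eps /\ forall t', Rabs (proj1_sig t' - proj1_sig t) < eps -> V t'.
Proof.
  intros (U & HU & HVU) Vt. destruct (HU _ (proj1 (HVU t) Vt)) as (eps & He & Hball).
  exists eps; split; auto. intros t' Ht'. apply HVU, Hball, Ht'.
Qed.

Lemma I01_open_of_nbhd (V : I01 -> Prop) :
  (forall t, V t -> exists eps, 0 < eps /\
     forall t', Rabs (proj1_sig t' - proj1_sig t) < eps -> V t') ->
  I01_topology V.
Proof.
  intros H. exists (fun s => exists eps, 0 < eps /\
                     forall t' : I01, Rabs (proj1_sig t' - s) < eps -> V t').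
  split.
  - intros s (eps & He & Hball). exists (eps / 2); split; [lra|]. intros r Hr.
    exists (eps / 2); split; [lra|]. intros t' Ht'. apply Hball.
    replace (proj1_sig t' - s) with ((proj1_sig t' - r) + (r - s)) by ring.
    eapply Rle_lt_trans; [apply Rabs_triang|lra].
  - intros t; split; [apply H|].
    intros (eps & He & Hball). apply Hball. rewrite Rminus_diag, Rabs_R0; exact He.
Qed.

Lemma I01_cluster_point (s : nat -> I01) :
  exists t : I01, forall eps, 0 < eps -> forall N,
    exists p, (N <= p)%nat /\ Rabs (proj1_sig (s p) - proj1_sig t) < eps.
Proof.
  destruct (Bolzano_Weierstrass (fun j => proj1_sig (s j)) _ (compact_P3 0 1)
              (fun j => proj2_sig (s j))) as [l Hl].
  assert (Hnear : forall eps, 0 < eps -> forall N,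
             exists p, (N <= p)%nat /\ Rabs (proj1_sig (s p) - l) < eps).
  { intros eps He N. apply (Hl (fun r => Rabs (r - l) < eps) N).
    exists (mkposreal eps He); intros r Hr; exact Hr. }
  assert (Hl01 : 0 <= l <= 1).
  { split; apply Rnot_lt_le; intros Hlt.
    - destruct (Hnear (- l) ltac:(lra) 0%nat) as (p & _ & Hp).
      destruct (proj2_sig (s p)). apply Rabs_def2 in Hp. lra.
    - destruct (Hnear (l - 1) ltac:(lra) 0%nat) as (p & _ & Hp).
      destruct (proj2_sig (s p)). apply Rabs_def2 in Hp. lra. }
  exists (exist _ l Hl01); exact Hnear.
Qed.

Section JamesConcat.
Context {X : Type} (T : topology X) (HT : is_topology T) (HH : hausdorff T) (e : X).

Lemma reduce_app x y : reduce e (x ++ y) = J_concat e (reduce e x) (reduce e y).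
Proof. apply J_eq; simpl; apply filter_app. Qed.

Lemma reduce_lift n (w : J X e) x : is_lift e n (proj1_sig w) x -> reduce e x = w.
Proof. intros [_ Hf]; apply J_eq; exact Hf. Qed.

Lemma is_lift_pad n (w : J X e) : (length (proj1_sig w) <= n)%nat ->
  is_lift e n (proj1_sig w) (proj1_sig w ++ repeat e (n - length (proj1_sig w))).
Proof.
  intros Hn; split.
  - rewrite length_app, repeat_length; lia.
  - assert (He : forall k, filter (is_not_e e) (repeat e k) = nil).
    { induction k; simpl; auto. rewrite (proj2 (is_not_e_false e e) eq_refl); auto. }
    rewrite filter_app, He, app_nil_r. apply filter_reduced, proj2_sig.
Qed.

Definition lifts (n : nat) (u : list X) : list (list X) :=
  map (fun B => scatter e B u)
      (filter (fun B => Nat.eqb (count_true B) (length u)) (bool_lists n)).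

Lemma in_lifts n (w : J X e) x : In x (lifts n (proj1_sig w)) <-> is_lift e n (proj1_sig w) x.
Proof.
  unfold lifts. rewrite in_map_iff. split.
  - intros (B & <- & HB). apply filter_In in HB as [HB Hc].
    apply Nat.eqb_eq in Hc. apply in_bool_lists in HB. split.
    + rewrite length_scatter; exact HB.
    + rewrite (filter_scatter e); [apply filter_reduced, proj2_sig|apply is_not_e_false|lia].
  - intros [Hx Hf]. exists (map (is_not_e e) x). split.
    + rewrite <- Hf. apply scatter_filter, is_not_e_false.
    + apply filter_In; split; [apply in_bool_lists; rewrite length_map; exact Hx|].
      apply Nat.eqb_eq. rewrite count_true_map, Hf; reflexivity.
Qed.

(** The fibres of [q_N1] and [q_N2] are finite, so the tube lemma applies to
    the preimage of [V] in X^(N1+N2); [q_N] being closed brings the tube back. *)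
Lemma J_concat_layer_nbhd N1 N2 (u v : J X e) (V : J X e -> Prop) :
  J_topology T e V -> V (J_concat e u v) ->
  exists G1 G2, J_topology T e G1 /\ J_topology T e G2 /\ G1 u /\ G2 v /\
    forall u' v', (length (proj1_sig u') <= N1)%nat -> (length (proj1_sig v') <= N2)%nat ->
      G1 u' -> G2 v' -> V (J_concat e u' v').
Proof.
  intros HV Huv.
  destruct (power_open_tube T HT N1 N2 (fun z => V (reduce e z))
              (lifts N1 (proj1_sig u)) (lifts N2 (proj1_sig v)))
    as (O1 & O2 & HO1 & HO2 & Hu & Hv & HO).
  - exact (proj1 (J_open_iff T e V) HV (N1 + N2)%nat).
  - intros x Hx; apply in_lifts in Hx; apply Hx.
  - intros y Hy; apply in_lifts in Hy; apply Hy.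
  - intros x y Hx Hy. apply in_lifts in Hx, Hy.
    rewrite reduce_app, (reduce_lift _ _ _ Hx), (reduce_lift _ _ _ Hy); exact Huv.
  - exists (lifts_within e N1 O1), (lifts_within e N2 O2).
    split; [apply lifts_within_open; auto|split; [apply lifts_within_open; auto|]].
    split; [intros x Hx; apply Hu, in_lifts, Hx|split; [intros y Hy; apply Hv, in_lifts, Hy|]].
    intros u' v' Hu' Hv' G1 G2.
    pose proof (is_lift_pad N1 u' Hu') as L1. pose proof (is_lift_pad N2 v' Hv') as L2.
    specialize (HO _ _ (G1 _ L1) (G2 _ L2)).
    rewrite reduce_app, (reduce_lift _ _ _ L1), (reduce_lift _ _ _ L2) in HO; exact HO.
Qed.

(** By compactness, a path of unbounded length would accumulate at some time
    [t0]; the words it takes near [t0] that are longer than [alpha t0] can be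
    chosen to form a closed set avoiding [alpha t0]. *)
Lemma J_path_length_bounded (alpha : I01 -> J X e) :
  continuous I01_topology (J_topology T e) alpha ->
  exists N, forall t, (length (proj1_sig (alpha t)) <= N)%nat.
Proof.
  intros Hc. apply NNPP; intros Hunb.
  assert (Hlong : forall j, exists t, (j < length (proj1_sig (alpha t)))%nat).
  { intros j. apply NNPP; intros Hn. apply Hunb. exists j; intros t.
    apply Nat.nlt_ge; intros Hl; apply Hn; exists t; exact Hl. }
  set (s := fun j => proj1_sig (constructive_indefinite_description _ (Hlong j))).
  assert (Hs : forall j, (j < length (proj1_sig (alpha (s j))))%nat)
    by (intros j; exact (proj2_sig (constructive_indefinite_description _ (Hlong j)))).
  destruct (I01_cluster_point s) as [t0 Ht0].
  set (L := length (proj1_sig (alpha t0))).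
  set (w := fun j => alpha (s (S L + j)%nat)).
  assert (Hw : forall j, (j < length (proj1_sig (w j)))%nat)
    by (intros j; specialize (Hs (S L + j)%nat); unfold w; lia).
  destruct (I01_open_nbhd _ t0 (Hc _ (J_compl_seq_open T HT HH e w Hw))) as (eps & He & Hnear).
  { intros (j & Hj). specialize (Hs (S L + j)%nat).
    change (alpha (s (S L + j)%nat)) with (w j) in Hs. rewrite <- Hj in Hs. unfold L in Hs; lia. }
  destruct (Ht0 eps He (S L)) as (p & Hp & Hd).
  apply (Hnear (s p) Hd). exists (p - S L)%nat. unfold w.
  replace (S L + (p - S L))%nat with p by lia; reflexivity.
Qed.

Lemma J_concat_path_continuous (alpha beta : I01 -> J X e) :
  continuous I01_topology (J_topology T e) alpha ->
  continuous I01_topology (J_topology T e) beta ->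
  continuous I01_topology (J_topology T e) (fun t => J_concat e (alpha t) (beta t)).
Proof.
  intros Ha Hb V HV. apply I01_open_of_nbhd. intros t0 Vt0.
  destruct (J_path_length_bounded alpha Ha) as [N1 HN1].
  destruct (J_path_length_bounded beta Hb) as [N2 HN2].
  destruct (J_concat_layer_nbhd N1 N2 _ _ V HV Vt0) as (G1 & G2 & HG1 & HG2 & Ga & Gb & HG).
  destruct (I01_open_nbhd _ t0 (Ha G1 HG1) Ga) as (eps1 & He1 & Hnear1).
  destruct (I01_open_nbhd _ t0 (Hb G2 HG2) Gb) as (eps2 & He2 & Hnear2).
  exists (Rmin eps1 eps2); split; [apply Rmin_glb_lt; auto|]. intros t Ht.
  apply HG; auto.
  - apply Hnear1; eapply Rlt_le_trans; [exact Ht|apply Rmin_l].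
  - apply Hnear2; eapply Rlt_le_trans; [exact Ht|apply Rmin_r].
Qed.

Lemma J_is_topology : is_topology (J_topology T e).
Proof.
  split; [|split].
  - apply J_open_iff; intros n. apply power_open_true; auto.
  - intros U V HU HV. apply J_open_iff; intros n.
    apply (power_open_and T HT n (fun l => U (reduce e l)) (fun l => V (reduce e l)));
      apply J_open_iff; auto.
  - intros I F HF. apply J_open_iff; intros n l Hl (i & Hi).
    destruct (proj1 (J_open_iff T e (F i)) (HF i) n l Hl Hi) as (Us & HUs & Hb & HW).
    exists Us; split; [auto|split; [auto|]]. intros l' H'; exists i; auto.
Qed.

End JamesConcat.

Theorem mainTheorem15 (X : Type) (T : topology X) (e : X) :
  is_topology T -> hausdorff T ->
  pre_Delta_monoid (J_topology T e) (J_concat e) (J_empty e).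
Proof.
  intros HT HH. split; [apply J_is_topology; auto|split; [|split]].
  - intros a b c; apply J_eq; symmetry; apply app_assoc.
  - intros a; split; apply J_eq; [reflexivity|apply app_nil_r].
  - intros alpha beta; apply J_concat_path_continuous; auto.
Qed.
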